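(* Let $G$ be a graph, $\mathcal R=\{G_v: v\in V(G)\}$ a family of pairwise vertex-disjoint graphs, and let $S$ be a Grundy dominating sequence of $G\hookleftarrow\mathcal R$. Then there exists a Grundy dominating sequence $S'$ of $G\hookleftarrow\mathcal R$ such that, for every $v\in V(G)$ with $\widehat{S'}\cap V(G_v)\neq\emptyset$ and $\ell_{S'}(v)\in I_{S'}$, it holds that (1) $f_{S'}(w)\in V(G_v)$ for all $w\in V(G_v)$, and (2) $|\widehat{S'}\cap V(G_v)|=\gamma_{gr}(G_v)$.
   Context: All graphs are finite and simple; $N[v]$ denotes the closed neighborhood. The $X$-join product $G\hookleftarrow \mathcal R$ has vertex set $\bigcup_{v\in V(G)}V(G_v)$, the edges of all $G_v$, and all edges between $V(G_u)$ and $V(G_v)$ whenever $uv\in E(G)$. For a sequence $S=(v_1,\dots,v_k)$ of distinct vertices, $\widehat S=\{v_1,\dots,v_k\}$, $|S|=k$, and $PN_S(v_i)=N[v_i]\setminus\bigcup_{j<i}N[v_j]$. $S$ is a legal dominating sequence if $\widehat S$ is dominating and all $PN_S(v_i)\neq\emptyset$; a Grundy dominating sequence is a legal dominating sequence of maximum length, this length being $\gamma_{gr}$. For a legal dominating sequence $S$, the footprinter $f_S(x)$ of a vertex $x$ is the unique $v\in\widehat S$ with $x\in PN_S(v)$, and $I_S=\{v: f_S(v)=v\}$. For $v\in V(G)$ with $\widehat S\cap V(G_v)\neq\emptyset$, $\ell_S(v)$ denotes the vertex of $\widehat S\cap V(G_v)$ appearing earliest in $S$. *)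

From mathcomp Require Import all_boot.
Set Implicit Arguments. Unset Strict Implicit. Unset Printing Implicit Defensive.

Definition simple_graph (T : finType) (e : rel T) : Prop :=
  symmetric e /\ irreflexive e.

Definition cnbhd (T : finType) (e : rel T) (x : T) : {set T} :=
  [set y | (y == x) || e x y].

(* every vertex has a nonempty private neighbourhood w.r.t. D, the union of
   closed neighbourhoods of the earlier vertices *)
Fixpoint legal_aux (T : finType) (e : rel T) (D : {set T}) (s : seq T) : bool :=
  match s with
  | [::] => true
  | x :: s' => (cnbhd e x :\: D != set0) && legal_aux e (D :|: cnbhd e x) s'
  end.

Definition legal_dom (T : finType) (e : rel T) (s : seq T) : bool :=
  [&& uniq s, legal_aux e set0 s & \bigcup_(x <- s) cnbhd e x == setT].

Definition grundy_seq (T : finType) (e : rel T) (s : seq T) : Prop :=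
  legal_dom e s /\ forall t, legal_dom e t -> size t <= size s.

(* Grundy domination number: maximum length of a legal dominating sequence
   (such sequences are duplicate-free, hence of length <= #|T|). *)
Definition gamma_gr (T : finType) (e : rel T) : nat :=
  \max_(n < #|T|.+1 | [exists t : n.-tuple T, legal_dom e t]) n.

(* footprinter f_S(x): the first vertex of S whose closed neighbourhood
   contains x (the unique v in \hat S with x in PN_S(v)). *)
Definition footprinter (T : finType) (e : rel T) (s : seq T) (x : T) : T :=
  nth x s (find (fun y => x \in cnbhd e y) s).

Definition xjoin (V : finType) (e : rel V) (T : V -> finType)
  (eR : forall v, rel (T v)) : rel {v : V & T v} :=
  fun a b => if tag a == tag b then eR (tag a) (tagged a) (tagged_as a b)
             else e (tag a) (tag b).

Definition ell (V : finType) (T : V -> finType) (s : seq {v : V & T v}) (v : V)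
  : option {v : V & T v} :=
  ohead [seq a <- s | tag a == v].

From mathcomp Require Import all_boot.
From Stdlib Require Import Classical_Prop.
Set Implicit Arguments. Unset Strict Implicit. Unset Printing Implicit Defensive.

(* Among the Grundy dominating sequences of the X-join, take one, S, that
   maximizes the number of its vertices lying in blocks G_u with l_S(u) in I_S.
   Let l_S(v) = a be in I_S.  If some w in G_v were footprinted by a vertex b
   outside G_v, then b lies in a block adjacent to v, hence in a block whose
   leader is adjacent to a and so is not in I_S; replacing b by w keeps the
   sequence legal (N[w] lies in N[b] and N[a], and a precedes b), of the same
   maximal length, and no other block loses its status, so the count grows:
   a contradiction.  Hence G_v is footprinted from inside.  Then the vertices
   of S in G_v, read in G_v, form a legal dominating sequence of G_v, so there
   are at most gamma_gr(G_v) of them; conversely, substituting a Grundy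
   dominating sequence of G_v for them at the position of a keeps S legal
   dominating, so maximality of |S| gives at least gamma_gr(G_v).  Only the
   base graph G needs to be simple. *)

Lemma exists_argmax (A : Type) (P : A -> Prop) (f : A -> nat) m x :
  P x -> (forall y, P y -> f y <= m) ->
  exists2 y, P y & forall z, P z -> f z <= f y.
Proof.
move=> + bnd; have [n] := ubnP (m - f x); elim: n x => // n IH x lt_n Px.
case: (classic (exists2 z, P z & f x < f z)) => [[z Pz lt_xz]|no_better].
  have lt_m : f x < m := leq_trans lt_xz (bnd z Pz).
  by apply: (IH z) => //; rewrite ltnS in lt_n; apply: leq_trans (ltn_sub2l lt_m lt_xz) lt_n.
by exists x => // z Pz; rewrite leqNgt; apply/negP => lt_xz; apply: no_better; exists z.
Qed.

Section Domination.

Variables (G : finType) (E : rel G).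

Definition dominated (s : seq G) : {set G} := \bigcup_(x <- s) cnbhd E x.

Lemma cnbhd_refl x : x \in cnbhd E x.
Proof. by rewrite inE eqxx. Qed.

Lemma dominatedP s z :
  reflect (exists2 x, x \in s & z \in cnbhd E x) (z \in dominated s).
Proof.
rewrite /dominated; elim: s => [|x s IH]; first by rewrite big_nil inE; constructor => -[].
rewrite big_cons inE; apply: (iffP orP).
  case=> [zx|/IH [y ys zy]]; first by exists x; rewrite ?mem_head.
  by exists y; rewrite // inE ys orbT.
case=> y; rewrite inE => /orP[/eqP->|ys] zy; first by left.
by right; apply/IH; exists y.
Qed.

Lemma dominated_cat p q : dominated (p ++ q) = dominated p :|: dominated q.
Proof. exact: big_cat. Qed.

Lemma dominated_cons x q : dominated (x :: q) = cnbhd E x :|: dominated q.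
Proof. exact: big_cons. Qed.

Lemma mem_dominated s x : x \in s -> x \in dominated s.
Proof. by move=> xs; apply/dominatedP; exists x; rewrite ?cnbhd_refl. Qed.

Lemma has_cnbhd s z : has (fun y => z \in cnbhd E y) s = (z \in dominated s).
Proof. by apply/hasP/dominatedP; case=> y; exists y. Qed.

Lemma legal_dom_dominated s z : legal_dom E s -> z \in dominated s.
Proof. by case/and3P=> _ _ /eqP domS; rewrite /dominated domS inE. Qed.

Lemma legal_aux_subset (D D' : {set G}) q :
  D' \subset D -> legal_aux E D q -> legal_aux E D' q.
Proof.
elim: q D D' => [|x q IH] D D' //= DD' /andP[PNx lq]; apply/andP; split.
  case/set0Pn: PNx => z; rewrite inE => /andP[zD zx].
  by apply/set0Pn; exists z; rewrite inE zx andbT; apply: contra zD; apply: (subsetP DD').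
by apply: IH lq; apply: setSU.
Qed.

Lemma legal_aux_cat D p q :
  legal_aux E D (p ++ q) = legal_aux E D p && legal_aux E (D :|: dominated p) q.
Proof.
elim: p D => [|x p IH] D /=; first by rewrite /dominated big_nil setU0.
by rewrite IH dominated_cons setUA andbA.
Qed.

Lemma legal_aux_filter (P : pred G) q D D' :
  legal_aux E D q ->
  (forall q1 x q2, q = q1 ++ x :: q2 -> P x ->
     cnbhd E x :&: D' \subset D :|: dominated q1) ->
  legal_aux E D' (filter P q).
Proof.
elim: q D D' => [|x q IH] D D' //= /andP[PNx lq] sub.
have sub_tail q1 y q2 : q = q1 ++ y :: q2 -> P y ->
    cnbhd E y :&: D' \subset (D :|: cnbhd E x) :|: dominated q1.
  move=> Eq Py; have := sub (x :: q1) y q2 (congr1 (cons x) Eq) Py.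
  by rewrite dominated_cons setUA [D :|: _]setUC.
case: ifP => Px /=; last exact: IH lq sub_tail.
apply/andP; split.
  have := sub [::] x q erefl Px; rewrite /dominated big_nil setU0 => subx.
  case/set0Pn: PNx => z; rewrite inE => /andP[zD zx].
  apply/set0Pn; exists z; rewrite inE zx andbT; apply: contra zD => zD'.
  by apply: (subsetP subx); rewrite inE zx zD'.
apply: IH lq _ => q1 y q2 Eq Py; apply/subsetP => z; rewrite !inE => /andP[zy].
case/orP=> [zD'|zx]; last by rewrite zx orbT.
by have /subsetP/(_ z) := sub_tail _ _ _ Eq Py; rewrite !inE zy zD' => /(_ isT).
Qed.

Lemma footprinter_catl p q z : z \in dominated p ->
  footprinter E (p ++ q) z = footprinter E p z.
Proof.
by rewrite -has_cnbhd => zp; rewrite /footprinter find_cat zp nth_cat -has_find zp.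
Qed.

Lemma footprinter_mem s z : z \in dominated s -> footprinter E s z \in s.
Proof. by rewrite -has_cnbhd has_find => zs; apply: mem_nth. Qed.

Lemma footprinter_cnbhd s z : z \in dominated s -> z \in cnbhd E (footprinter E s z).
Proof. by rewrite -has_cnbhd => zs; apply: (nth_find z zs). Qed.

Lemma footprinter_first p x q z : z \notin dominated p -> z \in cnbhd E x ->
  footprinter E (p ++ x :: q) z = x.
Proof.
rewrite -has_cnbhd => /negbTE zp zx.
by rewrite /footprinter find_cat zp nth_cat ltnNge leq_addr /= addKn /= zx.
Qed.

Lemma footprinter_self p q z : z \notin dominated p ->
  footprinter E (p ++ z :: q) z = z.
Proof. by move=> zp; rewrite footprinter_first ?cnbhd_refl. Qed.

Lemma footprinter_self_undominated p q z : z \notin p ->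
  footprinter E (p ++ z :: q) z = z -> z \notin dominated p.
Proof.
move=> zp fz; apply: contra zp => zDp.
by rewrite -{1}fz footprinter_catl // footprinter_mem.
Qed.

Lemma footprinter_later p x q y r : uniq (p ++ x :: q ++ y :: r) ->
  y \in cnbhd E x -> footprinter E (p ++ x :: q ++ y :: r) y != y.
Proof.
move=> us yx; have yD : y \in dominated (p ++ x :: q).
  by apply/dominatedP; exists x; rewrite // mem_cat mem_head orbT.
move: us; rewrite -cat_cons catA cat_uniq => /and3P[_ /hasPn /(_ y)].
rewrite mem_head footprinter_catl // => /(_ isT) yN _.
by apply: contraNneq yN => {1}<-; apply: footprinter_mem.
Qed.

Lemma footprinter_fixed_nonadj s x y : uniq s -> x \in s -> y \in s -> x != y ->
  footprinter E s x = x -> footprinter E s y = y ->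
  x \in cnbhd E y -> y \in cnbhd E x -> False.
Proof.
move=> us xs; case/splitPr: xs us => p r us.
rewrite mem_cat inE => /or3P[yp|/eqP->|yr]; last 2 first.
- by rewrite eqxx.
- case/splitPr: yr us => q r' us _ _ fy _ yNx.
  by have := footprinter_later us yNx; rewrite fy eqxx.
case/splitPr: yp us => q r'; rewrite -catA /= => us _ fx _ xNy _.
by have := footprinter_later us xNy; rewrite fx eqxx.
Qed.

Lemma footprinter_exchange_suffix p b w q c : uniq (p ++ b :: q) -> c \in q ->
  c \notin cnbhd E w -> footprinter E (p ++ b :: q) c = c ->
  footprinter E (p ++ w :: q) c = c.
Proof.
move=> + cq; case/splitPr: cq => q1 q2; rewrite -cat_cons catA => us cNw fc.
have cD : c \notin dominated (p ++ b :: q1).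
  apply: footprinter_self_undominated fc.
  by move: us; rewrite cat_uniq /= => /and3P[_ /norP[] ].
rewrite -cat_cons catA footprinter_self //.
move: cD; rewrite !dominated_cat !dominated_cons !in_setU !negb_or.
by case/and3P=> -> _ ->; rewrite cNw.
Qed.

Lemma legal_aux_extend s : uniq s -> legal_aux E set0 s ->
  exists t, legal_dom E (s ++ t).
Proof.
have [n] := ubnP #|~: dominated s|; elim: n s => // n IH s + us ls.
case: (pickP [pred z | z \notin dominated s]) => [z /= zD | all_dom] ltn; last first.
  exists [::]; rewrite cats0 /legal_dom us ls; apply/eqP/setP => x.
  by rewrite inE; apply/negbFE/all_dom.
have zs : z \notin s by apply: contra zD; apply: mem_dominated.
have lt_card : #|~: dominated (rcons s z)| < n.
  rewrite ltnS in ltn; apply: leq_trans ltn; apply: proper_card; apply/properP.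
  split; first by apply/subsetP => x; rewrite -cats1 dominated_cat !inE negb_or => /andP[].
  exists z; first by rewrite inE.
  by rewrite -cats1 dominated_cat dominated_cons in_setC !in_setU cnbhd_refl orbT.
have [||t lt] := IH (rcons s z) lt_card.
- by rewrite rcons_uniq zs.
- by rewrite -cats1 legal_aux_cat ls /= andbT set0U; apply/set0Pn; exists z;
    rewrite inE cnbhd_refl andbT.
by exists (z :: t); rewrite cat_rcons in lt.
Qed.

Lemma legal_dom_size_ltn s : legal_dom E s -> size s < #|G|.+1.
Proof. by case/and3P=> us _ _; rewrite ltnS -(card_uniqP us) max_card. Qed.

Lemma legal_dom_size_le_gamma_gr s : legal_dom E s -> size s <= gamma_gr E.
Proof.
move=> ls; apply: (@leq_bigmax_cond _ _ _ (Ordinal (legal_dom_size_ltn ls))).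
by apply/existsP; exists (in_tuple s).
Qed.

Lemma gamma_gr_attained : exists2 s, legal_dom E s & size s = gamma_gr E.
Proof.
pose A := fun n : 'I_#|G|.+1 => [exists t : n.-tuple G, legal_dom E t].
have A_gt0 : 0 < #|A|.
  have [t0 lt0] := legal_aux_extend (s := [::]) isT isT.
  apply/card_gt0P; exists (Ordinal (legal_dom_size_ltn lt0)).
  by apply/existsP; exists (in_tuple t0).
have [i /existsP[t lt] gi] := eq_bigmax_cond (fun n : 'I_#|G|.+1 => nat_of_ord n) A_gt0.
by exists t; rewrite // size_tuple /gamma_gr gi.
Qed.

End Domination.

Lemma card_set_filter (G : finType) (P : pred G) s : uniq s ->
  #|[set x in s | P x]| = count P s.
Proof.
move=> us; rewrite -size_filter -(card_uniqP (filter_uniq P us)).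
by apply: eq_card => x; rewrite inE mem_filter andbC.
Qed.

Lemma tagged_asK (I : eqType) (T_ : I -> Type) (u v : {i : I & T_ i}) :
  tag v = tag u -> Tagged T_ (tagged_as u v) = v.
Proof.
by case: u v => i x [j y] /= eji; subst j; rewrite tagged_asE.
Qed.

Section XJoin.

Variables (V : finType) (e : rel V) (T : V -> finType) (eR : forall v, rel (T v)).
Arguments eR : clear implicits.

Local Notation vtx := {v : V & T v}.
Local Notation E := (xjoin e eR).

Lemma cnbhd_xjoin_neq (x y : vtx) : tag x != tag y ->
  (y \in cnbhd E x) = e (tag x) (tag y).
Proof.
move=> xy; have yx : y != x by apply: contraNneq xy => ->.
by rewrite inE (negbTE yx) /= /xjoin (negbTE xy).
Qed.

Lemma cnbhd_xjoin_Tagged v (x y : T v) :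
  (Tagged T y \in cnbhd E (Tagged T x)) = (y \in cnbhd (eR v) x).
Proof. by rewrite !inE eq_Tagged /= /xjoin /= eqxx tagged_asE. Qed.

Lemma cnbhd_xjoin_tag (x y : vtx) : y \in cnbhd E x ->
  tag y = tag x \/ e (tag x) (tag y).
Proof.
by case: (eqVneq (tag x) (tag y)) => [->|xy]; [left | rewrite cnbhd_xjoin_neq //; right].
Qed.

Lemma cnbhd_xjoin_adj : irreflexive e -> forall x y : vtx,
  e (tag x) (tag y) -> y \in cnbhd E x.
Proof.
move=> irr x y exy; rewrite cnbhd_xjoin_neq //.
by apply: contraTneq exy => ->; rewrite irr.
Qed.

Lemma legal_aux_xjoin_Tagged v (B : seq (T v)) C (D : {set vtx}) :
  legal_aux (eR v) C B -> (forall y, Tagged T y \in D -> y \in C) ->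
  legal_aux E D (map (Tagged T) B).
Proof.
elim: B C D => [|y B IH] C D //= /andP[PNy lB] DC; apply/andP; split.
  case/set0Pn: PNy => z; rewrite inE => /andP[zC zy]; apply/set0Pn; exists (Tagged T z).
  by rewrite inE cnbhd_xjoin_Tagged zy andbT; apply: contra zC; apply: DC.
apply: IH lB _ => y'; rewrite !in_setU => /orP[/DC->//|].
by rewrite cnbhd_xjoin_Tagged => ->; rewrite orbT.
Qed.

Lemma legal_aux_xjoin_block (a : vtx) q (C : {set T (tag a)}) (D : {set vtx}) :
  legal_aux E D q ->
  (forall y, y \in C -> Tagged T y \in D) ->
  (forall z : vtx, e (tag a) (tag z) -> z \in D) ->
  legal_aux (eR (tag a)) C
    (map (tagged_as a) (filter (fun x => tag x == tag a) q)).
Proof.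
elim: q C D => [|x q IH] C D //= /andP[PNx lq] CD adjD.
case: eqP => [ta|_] /=; last first.
  by apply: IH lq _ _ => [y /CD|z /adjD]; rewrite in_setU => ->.
apply/andP; split.
  case/set0Pn: PNx => z; rewrite inE => /andP[zD zx].
  case: (eqVneq (tag z) (tag a)) => tz; last first.
    by move: zx; rewrite cnbhd_xjoin_neq ta 1?eq_sym // => /adjD; rewrite (negbTE zD).
  apply/set0Pn; exists (tagged_as a z).
  rewrite inE -cnbhd_xjoin_Tagged !tagged_asK // zx andbT.
  by apply: contra zD => /CD; rewrite tagged_asK.
apply: IH lq _ _ => [y|z /adjD]; rewrite !in_setU; last by move->.
by case/orP=> [/CD->//|]; rewrite -cnbhd_xjoin_Tagged !tagged_asK // => ->; rewrite orbT.
Qed.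

Lemma ell_cons (x : vtx) s u : ell (x :: s) u = if tag x == u then Some x else ell s u.
Proof. by rewrite /ell /=; case: eqP. Qed.

Lemma ell_split s u (a : vtx) : ell s u = Some a ->
  exists p r, [/\ s = p ++ a :: r, tag a = u & all (fun x => tag x != u) p].
Proof.
elim: s => [|x s IH] //; rewrite ell_cons; case: eqP => [xu [<-]|xu].
  by exists [::], s.
by case/IH=> p [r [-> au pu]]; exists (x :: p), r; split; rewrite //= pu andbT; apply/eqP.
Qed.

Lemma ell_mem s u (c : vtx) : ell s u = Some c -> c \in s.
Proof. by case/ell_split=> p [r [-> _ _]]; rewrite mem_cat mem_head orbT. Qed.

Lemma ell_tag s u (c : vtx) : ell s u = Some c -> tag c = u.
Proof. by case/ell_split=> p [r []]. Qed.

Lemma ell_cat_has p s u : has (fun x : vtx => tag x == u) p -> ell (p ++ s) u = ell p u.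
Proof. by rewrite /ell filter_cat has_filter; case: filter. Qed.

Lemma ell_exchange p q (b w : vtx) u : tag b != u -> tag w != u ->
  ell (p ++ b :: q) u = ell (p ++ w :: q) u.
Proof. by move=> bu wu; rewrite /ell !filter_cat /= (negbTE bu) (negbTE wu). Qed.

Section FixedLeaderBlock.

Hypothesis e_irr : irreflexive e.
Variables (v : V) (a0 : T v) (p r : seq vtx).
Let a : vtx := Tagged T a0.
Hypotheses (lS : legal_dom E (p ++ a :: r)) (p_out : all (fun x => tag x != v) p).
Hypothesis a_undom : a \notin dominated E p.
Hypothesis internal : forall w, tag w = v -> tag (footprinter E (p ++ a :: r) w) = v.

Lemma block_undominated z : tag z = v -> z \notin dominated E p.
Proof.
move=> zv; apply: contra a_undom => /dominatedP[y yp zy]; apply/dominatedP.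
have yv : tag y != v := allP p_out y yp.
exists y; rewrite // cnbhd_xjoin_neq //.
by move: zy; rewrite cnbhd_xjoin_neq zv.
Qed.

Lemma legal_dom_block_projection :
  legal_dom (eR v) (map (tagged_as a) (filter (fun x => tag x == v) (a :: r))).
Proof.
have /and3P[uS lS' _] := lS.
apply/and3P; split.
- rewrite map_inj_in_uniq ?filter_uniq //; first by move: uS; rewrite cat_uniq => /and3P[].
  move=> x y; rewrite !mem_filter => /andP[/eqP xv _] /andP[/eqP yv _] exy.
  by rewrite -(tagged_asK (u := a) xv) -(tagged_asK (u := a) yv) exy.
- rewrite /= eqxx /= tagged_asE setD0; apply/andP; split.
    by apply/set0Pn; exists a0; apply: cnbhd_refl.
  move: lS'; rewrite legal_aux_cat => /andP[_] /= /andP[_ lr].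
  apply: (legal_aux_xjoin_block (a := a)) lr _ _ => [y|z /(cnbhd_xjoin_adj e_irr)].
    by rewrite set0U !in_setU /a cnbhd_xjoin_Tagged => ->; rewrite orbT.
  by rewrite in_setU => ->; rewrite orbT.
apply/eqP/setP => y; rewrite inE; apply/dominatedP.
pose w : vtx := Tagged T y.
have wD : w \in dominated E (p ++ a :: r) := legal_dom_dominated w lS.
have fv := internal (erefl : tag w = v).
exists (tagged_as a (footprinter E (p ++ a :: r) w)).
  apply: map_f; rewrite mem_filter fv eqxx /=.
  have := footprinter_mem wD; rewrite mem_cat => /orP[fp|//].
  by have := allP p_out _ fp; rewrite fv eqxx.
by rewrite -cnbhd_xjoin_Tagged (tagged_asK (u := a)) ?footprinter_cnbhd.
Qed.

Lemma count_block_prefix : count (fun x => tag x == v) p = 0.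
Proof. by apply/eqP; rewrite -leqn0 leqNgt -has_count; apply/hasPn/allP. Qed.

Lemma count_block_le_gamma_gr :
  count (fun x => tag x == v) (p ++ a :: r) <= gamma_gr (eR v).
Proof.
have /legal_dom_size_le_gamma_gr := legal_dom_block_projection.
by rewrite size_map size_filter count_cat count_block_prefix.
Qed.

Section ReplaceBlock.

Variable B : seq (T v).
Hypothesis lB : legal_dom (eR v) B.
Let r' := filter (fun x => tag x != v) r.

Lemma uniq_replace_block : uniq (p ++ map (Tagged T) B ++ r').
Proof.
have /and3P[uS _ _] := lS; have /and3P[uB _ _] := lB.
rewrite uniq_catCA cat_uniq map_inj_uniq //; last exact: eq_from_Tagged.
rewrite uB /=; apply/andP; split.
  apply/hasPn => x; rewrite mem_cat mem_filter => /orP[/(allP p_out)|/andP[]] xv *;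
    by apply: contra xv => /mapP[y _ ->].
have -> : p ++ r' = filter (fun x => tag x != v) (p ++ a :: r).
  by rewrite filter_cat /= eqxx; congr (_ ++ _); apply/esym/all_filterP.
exact: filter_uniq.
Qed.

Lemma legal_aux_replace_block : legal_aux E set0 (p ++ map (Tagged T) B ++ r').
Proof.
have /and3P[_ lB' _] := lB.
move: (lS) => /and3P[_ + _]; rewrite !legal_aux_cat => /andP[-> /= /andP[_ lr]] /=.
apply/andP; split.
  apply: legal_aux_xjoin_Tagged lB' _ => y; rewrite set0U => yD.
  by have := block_undominated (erefl : tag (Tagged T y) = v); rewrite yD.
apply: legal_aux_filter lr _ => q1 x q2 r_eq xv; apply/subsetP => z.
rewrite in_setI !in_setU in_set0 /=.
case/andP=> zx /orP[->//|/dominatedP[_ /mapP[y _ ->] zy]].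
case: (cnbhd_xjoin_tag zy) => [zv|/(cnbhd_xjoin_adj e_irr (x := a))]; last first.
  by move->; rewrite orbT.
suff : z \in dominated E (p ++ a :: q1).
  by rewrite dominated_cat dominated_cons !in_setU => /or3P[]->; rewrite ?orbT.
apply: contraT => zD; have := internal zv.
by rewrite r_eq -cat_cons catA footprinter_first // => xv'; rewrite xv' eqxx in xv.
Qed.

Lemma dominated_replace_block z : z \in dominated E (p ++ map (Tagged T) B ++ r').
Proof.
have domB y : y \in dominated (eR v) B := legal_dom_dominated y lB.
case/dominatedP: (legal_dom_dominated z lS) => y yS zy; apply/dominatedP.
case: (eqVneq (tag y) v) => yv; last first.
  exists y => //; move: yS; rewrite !mem_cat inE mem_filter yv.
  by case/or3P=> [->|/eqP ya|->]; rewrite ?orbT //; rewrite ya eqxx in yv.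
case: (eqVneq (tag z) v) => zv.
  have [y' y'B zy'] := dominatedP _ _ _ (domB (tagged_as a z)).
  exists (Tagged T y'); first by rewrite !mem_cat map_f ?orbT.
  by rewrite -[z](tagged_asK (u := a) zv) cnbhd_xjoin_Tagged.
have [y' y'B _] := dominatedP _ _ _ (domB a0).
exists (Tagged T y'); first by rewrite !mem_cat map_f ?orbT.
by move: zy; rewrite !cnbhd_xjoin_neq 1?eq_sym ?yv.
Qed.

Lemma legal_dom_replace_block : legal_dom E (p ++ map (Tagged T) B ++ r').
Proof.
rewrite /legal_dom uniq_replace_block legal_aux_replace_block /=.
by apply/eqP/setP => z; rewrite inE dominated_replace_block.
Qed.

End ReplaceBlock.

Lemma gamma_gr_le_count_block :
  (forall t, legal_dom E t -> size t <= size (p ++ a :: r)) ->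
  gamma_gr (eR v) <= count (fun x => tag x == v) (p ++ a :: r).
Proof.
move=> maxS; have [B lB sizeB] := gamma_gr_attained (eR v).
have := maxS _ (legal_dom_replace_block lB).
rewrite !size_cat /= size_map size_filter sizeB count_cat count_block_prefix /= eqxx.
by rewrite -(count_predC (fun x => tag x == v) r) leq_add2l -addSn leq_add2r.
Qed.

End FixedLeaderBlock.

Lemma card_block_eq_gamma_gr S v (a : vtx) : irreflexive e -> grundy_seq E S ->
  ell S v = Some a -> footprinter E S a = a ->
  (forall w, tag w = v -> tag (footprinter E S w) = v) ->
  #|[set x in S | tag x == v]| = gamma_gr (eR v).
Proof.
move=> e_irr [lS maxS] /ell_split[p [r [S_eq <- p_out]]] fa internal; subst S.
case: a fa internal p_out lS maxS => u a0 /= fa internal p_out lS maxS.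
have a_undom : Tagged T a0 \notin dominated E p.
  by apply: footprinter_self_undominated fa; apply/negP => /(allP p_out); rewrite eqxx.
have /and3P[uS _ _] := lS.
rewrite card_set_filter //; apply/eqP.
rewrite eqn_leq (count_block_le_gamma_gr e_irr lS p_out internal).
exact: (gamma_gr_le_count_block e_irr lS p_out a_undom internal maxS).
Qed.

(* [leader_fixed S u] says that l_S(u) lies in I_S. *)
Definition leader_fixed (S : seq vtx) (u : V) : bool :=
  if ell S u is Some c then footprinter E S c == c else false.

Definition n_leader_fixed (S : seq vtx) : nat :=
  count (fun x => leader_fixed S (tag x)) S.

Lemma leader_fixed_adj S v (a : vtx) u : simple_graph e -> uniq S ->
  ell S v = Some a -> footprinter E S a = a -> e v u -> leader_fixed S u = false.
Proof.
move=> [e_sym e_irr] uS ella fa evu; rewrite /leader_fixed.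
case ellc: (ell S u) => [c|] //; apply/negP => /eqP fc.
have av := ell_tag ella; have cu := ell_tag ellc.
have ac : tag a != tag c by rewrite av cu; apply: contraTneq evu => ->; rewrite e_irr.
apply: (footprinter_fixed_nonadj uS (ell_mem ella) (ell_mem ellc) _ fa fc).
- by apply: contraNneq ac => ->.
- by rewrite cnbhd_xjoin_neq 1?eq_sym // cu av e_sym.
- by rewrite cnbhd_xjoin_neq // av cu.
Qed.

Section Exchange.

Hypothesis e_simple : simple_graph e.
Variables (v : V) (a w b : vtx) (p q : seq vtx).
Hypotheses (gS : grundy_seq E (p ++ b :: q)) (ella : ell (p ++ b :: q) v = Some a).
Hypotheses (fa : footprinter E (p ++ b :: q) a = a) (wv : tag w = v).
Hypotheses (fw : footprinter E (p ++ b :: q) w = b) (bv : tag b != v).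

Let uS : uniq (p ++ b :: q). Proof. by case: gS => /and3P[]. Qed.
Let lS : legal_aux E set0 (p ++ b :: q). Proof. by case: gS => /and3P[]. Qed.
Let av : tag a = v := ell_tag ella.

Lemma adj_footprinter_block : e (tag b) v.
Proof.
have wD : w \in dominated E (p ++ b :: q) := legal_dom_dominated w gS.1.
by have := footprinter_cnbhd wD; rewrite fw cnbhd_xjoin_neq ?wv // eq_sym -wv.
Qed.

Lemma leader_mem_prefix : a \in p.
Proof.
have aD : a \in dominated E (p ++ [:: b]).
  apply/dominatedP; exists b; first by rewrite mem_cat mem_head orbT.
  by rewrite cnbhd_xjoin_neq av ?adj_footprinter_block.
have := footprinter_mem aD; rewrite -(footprinter_catl q aD) -catA /= fa.
by rewrite mem_cat inE => /orP[//|/eqP ab]; move: bv; rewrite -ab av eqxx.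
Qed.

Lemma exchanged_undominated : w \notin dominated E p.
Proof.
have bp : b \notin p by move: uS; rewrite cat_uniq /= => /and3P[_ /norP[]].
by apply: contra bp => wD; rewrite -fw footprinter_catl // footprinter_mem.
Qed.

Lemma cnbhd_exchanged_sub : cnbhd E w \subset dominated E p :|: cnbhd E b.
Proof.
have [_ e_irr] := e_simple.
apply/subsetP => z zw; rewrite in_setU; case: (cnbhd_xjoin_tag zw) => [zv|].
  by rewrite cnbhd_xjoin_neq ?zv ?wv ?adj_footprinter_block ?orbT.
rewrite wv -av => /(cnbhd_xjoin_adj e_irr) za.
by apply/orP; left; apply/dominatedP; exists a; rewrite ?leader_mem_prefix.
Qed.

Lemma legal_aux_exchange : legal_aux E set0 (p ++ w :: q).
Proof.
move: lS; rewrite !legal_aux_cat => /andP[-> /= /andP[_ lq]] /=.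
apply/andP; split.
  by apply/set0Pn; exists w; rewrite in_setD cnbhd_refl set0U exchanged_undominated.
by apply: legal_aux_subset lq; rewrite !set0U subUset subsetUl cnbhd_exchanged_sub.
Qed.

Lemma exchanged_notin : w \notin p ++ b :: q.
Proof.
rewrite mem_cat inE; apply/negP => /or3P[wp|/eqP wb|wq].
- by move: exchanged_undominated; rewrite mem_dominated.
- by move: bv; rewrite -wb wv eqxx.
case/splitPr: wq lS => q1 q2; rewrite -cat_cons catA legal_aux_cat /= => /andP[_].
case/andP=> /set0Pn[z]; rewrite in_setD => /andP[+ /(subsetP cnbhd_exchanged_sub)].
rewrite !in_setU dominated_cat dominated_cons !in_setU.
by move=> zN /orP[] zin; rewrite zin !orbT in zN.
Qed.

Lemma grundy_exchange : grundy_seq E (p ++ w :: q).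
Proof.
have [_ maxS] := gS.
have uS2 : uniq (p ++ w :: q).
  move: uS exchanged_notin; rewrite !cat_uniq /= !mem_cat !inE !negb_or.
  by case/and4P=> -> /andP[_ ->] _ -> /and3P[-> _ ->].
have [t lt] := legal_aux_extend uS2 legal_aux_exchange.
have t0 : t = [::].
  apply/size0nil/eqP; have := maxS _ lt; rewrite !size_cat /=.
  by rewrite -[X in _ <= X]addn0 leq_add2l leqn0.
by move: lt; rewrite t0 cats0; split => // t' /maxS; rewrite !size_cat.
Qed.

Lemma leader_fixed_exchange u :
  leader_fixed (p ++ b :: q) u -> leader_fixed (p ++ w :: q) u.
Proof.
have [e_sym _] := e_simple.
have ap := leader_mem_prefix.
case: (eqVneq u v) => [-> _|uv].
  have has_v : has (fun x => tag x == v) p by apply/hasP; exists a; rewrite ?av.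
  have aD : a \in dominated E p := mem_dominated E ap.
  rewrite /leader_fixed ell_cat_has // -(ell_cat_has (b :: q) has_v) ella.
  by rewrite footprinter_catl // -(footprinter_catl (b :: q) aD) fa.
have [evu|nevu] := boolP (e v u); first by rewrite (leader_fixed_adj e_simple uS ella fa evu).
have bu : tag b != u by apply: contraNneq nevu => <-; rewrite e_sym adj_footprinter_block.
have wu : tag w != u by rewrite wv eq_sym.
rewrite /leader_fixed -(ell_exchange p q bu wu).
case ellc: ell => [c|] // /eqP fc; apply/eqP.
have cu := ell_tag ellc.
move: (ell_mem ellc); rewrite mem_cat inE => /or3P[cp|/eqP cb|cq].
- have cD : c \in dominated E p := mem_dominated E cp.
  by rewrite footprinter_catl // -(footprinter_catl (b :: q) cD) fc.
- by move: bu; rewrite -cb cu eqxx.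
have wc : tag w != tag c by rewrite wv cu eq_sym.
apply: footprinter_exchange_suffix uS cq _ fc.
by rewrite cnbhd_xjoin_neq // wv cu (negbTE nevu).
Qed.

Lemma n_leader_fixed_exchange :
  n_leader_fixed (p ++ b :: q) < n_leader_fixed (p ++ w :: q).
Proof.
have [e_sym _] := e_simple.
have b0 : leader_fixed (p ++ b :: q) (tag b) = false.
  by apply: leader_fixed_adj e_simple uS ella fa _; rewrite e_sym adj_footprinter_block.
have w1 : leader_fixed (p ++ w :: q) (tag w).
  by apply: leader_fixed_exchange; rewrite wv /leader_fixed ella fa.
rewrite /n_leader_fixed !count_cat /= b0 w1 add0n add1n addnS ltnS.
by rewrite leq_add ?sub_count // => x; apply: leader_fixed_exchange.
Qed.

End Exchange.

Lemma exists_exchange S v (a w : vtx) : simple_graph e -> grundy_seq E S ->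
  ell S v = Some a -> footprinter E S a = a ->
  tag w = v -> tag (footprinter E S w) != v ->
  exists2 S2, grundy_seq E S2 & n_leader_fixed S < n_leader_fixed S2.
Proof.
move=> e_simple gS ella fa wv.
have [b fw] : exists b, footprinter E S w = b by eexists.
have bS : b \in S by rewrite -fw footprinter_mem // legal_dom_dominated // gS.1.
rewrite fw; case/splitPr: bS gS ella fa fw => p q gS ella fa fw bv.
exists (p ++ w :: q); first exact: (grundy_exchange e_simple gS ella fa wv fw bv).
exact: (n_leader_fixed_exchange e_simple gS ella fa wv fw bv).
Qed.

End XJoin.

Theorem lemma2 (V : finType) (e : rel V) (He : simple_graph e)
  (T : V -> finType) (eR : forall v, rel (T v))
  (HR : forall v, simple_graph (eR v))
  (S : seq {v : V & T v}) :
  grundy_seq (xjoin e eR) S ->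
  exists S' : seq {v : V & T v},
    grundy_seq (xjoin e eR) S' /\
    forall (v : V) (a : {v : V & T v}),
      ell S' v = Some a ->
      footprinter (xjoin e eR) S' a = a ->
      (forall w : {v : V & T v}, tag w = v ->
          tag (footprinter (xjoin e eR) S' w) = v) /\
      #|[set x in S' | tag x == v]| = gamma_gr (eR v).
Proof.
move=> gS0.
have bounded S1 : grundy_seq (xjoin e eR) S1 -> n_leader_fixed e eR S1 <= size S.
  by case=> lS1 _; apply: leq_trans (count_size _ _) (gS0.2 _ lS1).
have [S' gS' maxS'] := exists_argmax gS0 bounded.
exists S'; split=> // v a ella fa.
have internal w : tag w = v -> tag (footprinter (xjoin e eR) S' w) = v.
  move=> wv; apply/eqP/negPn/negP => bv.
  have [S2 gS2 lt] := exists_exchange He gS' ella fa wv bv.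
  by have := maxS' _ gS2; rewrite leqNgt lt.
by split=> //; apply: card_block_eq_gamma_gr He.2 gS' ella fa internal.
Qed.
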